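(* Let $\mathcal{P}$ be a database program and $\Omega$ a sketch. Assume the oracle $\textsf{Verify}$ decides equivalence exactly (it returns true on $(\mathcal{P},\mathcal{P}')$ iff $\mathcal{P}\simeq\mathcal{P}'$) and, whenever $\mathcal{P}\not\simeq\mathcal{P}'$, supplies a minimum failing input. If there exists a completion $\mathcal{P}'\in\gamma(\Omega)$ with $\mathcal{P}'\simeq\mathcal{P}$, then $\textsc{CompleteSketch}(\Omega,\mathcal{P})$ returns (not $\bot$) a program $\mathcal{P}''\in\gamma(\Omega)$ with $\mathcal{P}''\simeq\mathcal{P}$.
   Context: A database program is a finite set of named functions, each either an update function (a sequence of insert/delete/update statements on database tables, parameterized by arguments) or a query function (a relational-algebra query parameterized by arguments). An invocation sequence is $\omega=(f_1,\sigma_1);\dots;(f_k,\sigma_k)$ where $f_1,\dots,f_{k-1}$ are update functions, $f_k$ is a query function, and $\sigma_i$ are arguments; $[\![\mathcal{P}]\!]_\omega$ denotes the query result of executing $\omega$ on $\mathcal{P}$ from the empty database. $\mathcal{P}\simeq\mathcal{P}'$ iff $[\![\mathcal{P}]\!]_\omega=[\![\mathcal{P}']\!]_\omega$ for all invocation sequences $\omega$. A minimum failing input for $\mathcal{P},\mathcal{P}'$ is an invocation sequence $\omega$ of minimal length with $[\![\mathcal{P}]\!]_\omega\neq[\![\mathcal{P}']\!]_\omega$. A sketch $\Omega$ is a database program (with the same function names and signatures as $\mathcal{P}$) in which finitely many holes $\textbf{??}_1,\dots,\textbf{??}_m$ occur, each hole $\textbf{??}_i$ lying inside the body of exactly one function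 and having a finite domain $\{e_i^1,\dots,e_i^{n_i}\}$ of candidate constants (tables, join chains, attributes, table lists, etc.). A completion of $\Omega$ is $\Omega[\vec e/\vec{\textbf{??}}]$ for a choice $e_i\in\{e_i^1,\dots,e_i^{n_i}\}$ for each $i$; $\gamma(\Omega)$ is the set of completions. The body of each function in a completion depends only on the values assigned to the holes occurring in that function. $\textsc{CompleteSketch}(\Omega,\mathcal{P})$: introduce Boolean variables $b_i^j$ ($b_i^j$ true iff $\textbf{??}_i$ is filled with $e_i^j$) and set $\Psi:=\bigwedge_{i=1}^m\oplus(b_i^1,\dots,b_i^{n_i})$, where $\oplus$ means exactly one argument is true. While $\Psi$ is satisfiable: take a model $\mathcal{M}$ of $\Psi$, let $\mathcal{P}'$ be the completion it encodes; if $\textsf{Verify}(\mathcal{P},\mathcal{P}')$ returns true, return $\mathcal{P}'$; otherwise obtain a minimum failing input $\omega$, let $H$ be the set of indices of holes occurring in the functions invoked in $\omega$, and set $\Psi:=\Psi\land\neg\bigwedge_{i\in H}b_i^{j_i}$ where $j_i$ is the index with $\mathcal{M}(b_i^{j_i})=\text{true}$. When $\Psi$ becomes unsatisfiable, return $\bot$. *)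

From mathcomp Require Import all_boot.
Set Implicit Arguments. Unset Strict Implicit. Unset Printing Implicit Defensive.

(* The theorem is stated for every
   such language, so in particular for the relational one of the paper. *)
Record dblang := DBLang {
  uname : eqType;
  qname : eqType;
  uarg : uname -> Type;
  qarg : qname -> Type;
  ubody : uname -> Type;
  qbody : qname -> Type;
  db : Type;
  db_empty : db;
  result : Type;
  usem : forall u, ubody u -> uarg u -> db -> db;
  qsem : forall q, qbody q -> qarg q -> db -> result }.

Record program (L : dblang) := Program {
  pu : forall u : uname L, ubody u;
  pq : forall q : qname L, qbody q }.

(* Invocation sequence (f1,s1);...;(f_{k-1},s_{k-1}) updates, then (fk,sk) query. *)
Record invseq (L : dblang) := InvSeq {
  iupd : seq {u : uname L & uarg u};
  iqry : {q : qname L & qarg q} }.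

Definition inv_length L (w : invseq L) : nat := (size (iupd w)).+1.

Definition exec_upd L (P : program L) (d : db L) (c : {u : uname L & uarg u}) : db L :=
  usem (pu P (projT1 c)) (projT2 c) d.

Definition denote L (P : program L) (w : invseq L) : result L :=
  qsem (pq P (projT1 (iqry w))) (projT2 (iqry w))
       (foldl (exec_upd P) (db_empty L) (iupd w)).

Definition prog_equiv L (P P' : program L) : Prop := forall w, denote P w = denote P' w.

Definition min_failing L (P P' : program L) (w : invseq L) : Prop :=
  denote P w <> denote P' w /\
  forall w' : invseq L, inv_length w' < inv_length w -> denote P w' = denote P' w'.

Definition invoked L (w : invseq L) : seq (uname L + qname L) :=
  [seq inl (projT1 c) | c <- iupd w] ++ [:: inr (projT1 (iqry w))].

(* A sketch: holes ??_0..??_(m-1); hole i has candidates e_i^0..e_i^(n_i - 1)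
   (indexed by 'I_(n_i)), lies in the function [howner i]; [fill a] is the
   completion obtained by filling each hole i with its candidate number [a i]. *)
Record sketch (L : dblang) := Sketch {
  nholes : nat;
  hdom : 'I_nholes -> nat;
  howner : 'I_nholes -> uname L + qname L;
  fill : (forall i : 'I_nholes, 'I_(hdom i)) -> program L }.

Definition hassign L (S : sketch L) := forall i : 'I_(nholes S), 'I_(hdom i).

Definition completion L (S : sketch L) (P : program L) : Prop :=
  exists a : hassign S, P = fill a.

Definition sketch_local L (S : sketch L) : Prop :=
  (forall (a a' : hassign S) (u : uname L),
      (forall i, howner i = inl u -> a i = a' i) -> pu (fill a) u = pu (fill a') u) /\
  (forall (a a' : hassign S) (q : qname L),
      (forall i, howner i = inr q -> a i = a' i) -> pq (fill a) q = pq (fill a') q).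

Definition bvar L (S : sketch L) := {i : 'I_(nholes S) & 'I_(hdom i)}.
Definition valuation L (S : sketch L) := bvar S -> bool.

(* The formula Psi = (/\_i xor(b_i^0..b_i^(n_i-1))) /\ /\_{c in blocks} ~(/\_{v in c} v),
   represented by its list of blocked cubes [blocks]. *)
Definition formula L (S : sketch L) := seq (seq (bvar S)).

Definition holds L (S : sketch L) (M : valuation S) (Psi : formula S) : Prop :=
  (forall i : 'I_(nholes S),
      count (fun j : 'I_(hdom i) => M (existT _ i j)) (enum 'I_(hdom i)) = 1) /\
  all (fun c => ~~ all M c) Psi.

Definition satisfiable L (S : sketch L) (Psi : formula S) : Prop :=
  exists M, holds M Psi.

Definition encodes L (S : sketch L) (M : valuation S) (a : hassign S) : Prop :=
  forall i, M (existT _ i (a i)).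

Definition block L (S : sketch L) (a : hassign S) (w : invseq L) : seq (bvar S) :=
  [seq existT (fun i => 'I_(hdom i)) i (a i)
     | i <- enum 'I_(nholes S) & howner i \in invoked w].

Definition psi0 L (S : sketch L) : formula S := [::].

(* CompleteSketch(S, P), with an exact Verify oracle that additionally supplies
   an (arbitrary) minimum failing input; the choice of model M and of the
   minimum failing input are nondeterministic.  [cs_returns P S Psi r]: the
   loop started in state Psi may return r (None = bottom). *)
Inductive cs_returns L (P : program L) (S : sketch L) : formula S -> option (program L) -> Prop :=
| cs_unsat Psi : ~ satisfiable Psi -> cs_returns P Psi None
| cs_found Psi (M : valuation S) (a : hassign S) :
    holds M Psi -> encodes M a -> prog_equiv P (fill a) -> cs_returns P Psi (Some (fill a))
| cs_refine Psi (M : valuation S) (a : hassign S) (w : invseq L) r :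
    holds M Psi -> encodes M a -> ~ prog_equiv P (fill a) -> min_failing P (fill a) w ->
    cs_returns P (block a w :: Psi) r -> cs_returns P Psi r.

Definition cs_step L (P : program L) (S : sketch L) (Psi Psi' : formula S) : Prop :=
  exists (M : valuation S) (a : hassign S) (w : invseq L),
    [/\ holds M Psi, encodes M a, ~ prog_equiv P (fill a), min_failing P (fill a) w
      & Psi' = block a w :: Psi].

From Stdlib Require Import Wf_nat.
From mathcomp Require Import all_boot.
Set Implicit Arguments. Unset Strict Implicit. Unset Printing Implicit Defensive.

(* Termination: a valuation M satisfying Psi encodes the completion that is
   checked, and the blocking cube added afterwards is true under M.  Hence the
   finite set of models of the formula loses at least M at every failing
   iteration, so its cardinality is a strictly decreasing measure.

   Correctness: let [a*] fill the sketch into a program equivalent to P and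
   let M* be the valuation encoding [a*].  M* satisfies the initial formula,
   and no blocking cube can exclude it: a cube built from a failing input w
   and a completion [fill a] only mentions holes of the functions invoked in
   w, so if M* satisfied it, [a] and [a*] would agree on those holes and, by
   locality of the sketch, [fill a] and [fill a*] (hence P) would agree on w.
   So every reachable formula stays satisfiable: a run can never return bottom,
   and whatever it returns passed the exact equivalence check. *)

Section Locality.
Variables (L : dblang) (S : sketch L).
Hypothesis local : sketch_local S.

Lemma exec_local (a a' : hassign S) (s : seq {u : uname L & uarg u}) d :
  (forall i, howner i \in [seq (inl (projT1 c) : uname L + qname L) | c <- s] ->
     a i = a' i) ->
  foldl (exec_upd (fill a)) d s = foldl (exec_upd (fill a')) d s.
Proof.
case: local => locu _; elim: s d => [|c s IH] d agree //=.
rewrite /exec_upd (locu a a' (projT1 c)) => [|i owner_i]; last first.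
  by apply: agree; rewrite inE owner_i eqxx.
by apply: IH => i in_s; apply: agree; rewrite inE in_s orbT.
Qed.

Lemma denote_local (a a' : hassign S) (w : invseq L) :
  (forall i, howner i \in invoked w -> a i = a' i) ->
  denote (fill a) w = denote (fill a') w.
Proof.
case: (local) => _ locq agree; rewrite /denote (exec_local (a' := a')).
  rewrite (locq a a') // => i owner_i.
  by apply: agree; rewrite mem_cat owner_i mem_seq1 eqxx orbT.
by move=> i in_upd; apply: agree; rewrite mem_cat in_upd.
Qed.

End Locality.

Section Termination.
Variables (L : dblang) (S : sketch L).

Definition holdsb (M : valuation S) (Psi : formula S) : bool :=
  [forall i : 'I_(nholes S),
      count (fun j : 'I_(hdom i) => M (existT _ i j)) (enum 'I_(hdom i)) == 1] &&
  all (fun c => ~~ all M c) Psi.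

Lemma holdsP M Psi : holds M Psi <-> holdsb M Psi.
Proof.
split; first by case=> one blocked; rewrite /holdsb blocked andbT; apply/forallP=> i; rewrite one.
by case/andP => /forallP one blocked; split => // i; apply/eqP.
Qed.

Definition models (Psi : formula S) : {set {ffun bvar S -> bool}} :=
  [set f : {ffun bvar S -> bool} | holdsb (fun v => f v) Psi].

Lemma mem_models (M : valuation S) Psi : ([ffun v => M v] \in models Psi) = holdsb M Psi.
Proof.
rewrite inE; congr andb; last by apply: eq_all => c; congr negb; apply: eq_all => v; rewrite ffunE.
by apply: eq_forallb => i; congr eq_op; apply: eq_count => j; rewrite ffunE.
Qed.

Lemma models_block (M : valuation S) (c : seq (bvar S)) Psi :
  holds M Psi -> all M c -> models (c :: Psi) \proper models Psi.
Proof.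
move=> /holdsP HM Mc; apply/properP; split.
  by apply/subsetP => f; rewrite !inE /holdsb /= => /and3P [-> _ ->].
exists [ffun v => M v]; first by rewrite mem_models.
by rewrite mem_models /holdsb /= Mc andbF.
Qed.

Lemma block_encoded (M : valuation S) (a : hassign S) (w : invseq L) :
  encodes M a -> all M (block a w).
Proof. by move=> enc; apply/allP => _ /mapP [i _ ->]; apply: enc. Qed.

Lemma cs_step_models (P : program L) (Psi Psi' : formula S) :
  cs_step P Psi Psi' -> #|models Psi'| < #|models Psi|.
Proof.
case=> M [a [w [HM enc _ _ ->]]]; apply: proper_card.
exact: models_block HM (block_encoded w enc).
Qed.

Lemma cs_step_wf (P : program L) : well_founded (fun Psi' Psi => @cs_step L P S Psi Psi').
Proof.
apply: (well_founded_lt_compat _ (fun Psi => #|models Psi|)) => Psi' Psi step.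
by apply/ltP; apply: cs_step_models step.
Qed.

End Termination.

Section Correctness.
Variables (L : dblang) (P : program L) (S : sketch L) (astar : hassign S).
Hypothesis local : sketch_local S.
Hypothesis astar_equiv : prog_equiv (fill astar) P.

Definition Mstar : valuation S := fun v => projT2 v == astar (projT1 v).

Lemma Mstar_encodes : encodes Mstar astar.
Proof. by move=> i; rewrite /Mstar /= eqxx. Qed.

Lemma Mstar_psi0 : holds Mstar (psi0 S).
Proof.
split=> // i; rewrite /Mstar /=.
by rewrite (count_uniq_mem (astar i) (enum_uniq 'I_(hdom i))) mem_enum.
Qed.

Lemma Mstar_not_blocked (a : hassign S) (w : invseq L) :
  denote P w <> denote (fill a) w -> ~~ all Mstar (block a w).
Proof.
move=> fail; apply/negP => all_star; apply: fail.
rewrite -(astar_equiv w); symmetry; apply: denote_local => // i owner_i.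
have : existT (fun i => 'I_(hdom i)) i (a i) \in block a w.
  by apply/mapP; exists i => //; rewrite mem_filter owner_i mem_enum.
by move/(allP all_star) => /eqP.
Qed.

Lemma cs_returns_correct Psi r : cs_returns P Psi r -> holds Mstar Psi ->
  exists P'', r = Some P'' /\ completion S P'' /\ prog_equiv P'' P.
Proof.
elim=> {Psi r} [Psi unsat HM | Psi M a _ _ equiv _ | Psi M a w r _ _ _ [fail _] _ IH [one blocked]].
- by case: unsat; exists Mstar.
- by exists (fill a); split; [|split; [exists a | move=> w; symmetry; apply: equiv]].
- by apply: IH; split => //=; rewrite blocked andbT; apply: Mstar_not_blocked.
Qed.

End Correctness.

Theorem mainTheorem2 (L : dblang) (P : program L) (S : sketch L) :
  sketch_local S ->
  (exists P', completion S P' /\ prog_equiv P' P) ->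
  (* every run terminates *)
  Acc (fun Psi' Psi => @cs_step L P S Psi Psi') (psi0 S) /\
  (* some run returns *)
  (exists r, @cs_returns L P S (psi0 S) r) /\
  (* every run returns a correct completion, not bottom *)
  (forall r, @cs_returns L P S (psi0 S) r ->
     exists P'', r = Some P'' /\ completion S P'' /\ prog_equiv P'' P).
Proof.
move=> local [_ [[astar ->] astar_equiv]].
split; first exact: cs_step_wf.
split; last by move=> r run; apply: cs_returns_correct run (Mstar_psi0 astar).
exists (Some (fill astar)).
apply: (cs_found (M := Mstar astar)); [exact: Mstar_psi0 | exact: Mstar_encodes |].
by move=> w; symmetry; apply: astar_equiv.
Qed.
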